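(* Let $\Delta_{1,0}=\{A=(a_{ij})\in SL_3(\mathfrak{o}) : (a_{21}\neq 0\text{ or }a_{31}\neq0)\text{ and } a_{21}a_{32}-a_{22}a_{31}=0\}$. Then $$\Delta_{1,0}=\bigsqcup_{\substack{y_1,y_2\in Y(\mathfrak{o})\\ y_2\neq I_2}}\ \bigsqcup_{d\in D(3)}\ \bigsqcup_{u\in U(3)} \varphi_2(y_1^{-1})\,\varphi_1(y_2^{-1})\,d\,u\,\Gamma_\infty(3),$$ i.e. $\Delta_{1,0}$ is the union of these sets and they are pairwise disjoint for distinct tuples $(y_1,y_2,d,u)$.
   Context: Let $\omega=e^{2\pi i/3}$, $\mathfrak{o}=\mathbb{Z}[\omega]$, $\mathfrak{o}^\times$ its unit group. Fix representatives of nonzero elements modulo units (''$c\in(\mathfrak{o}-\{0\})/\mathfrak{o}^\times$'') and, for each nonzero $c$, representatives of $\mathfrak{o}/c\mathfrak{o}$ (''$a\in\mathfrak{o}/c\mathfrak{o}$''). $Y(\mathfrak{o})=\{\begin{pmatrix}a&b\\c&d\end{pmatrix}\in SL_2(\mathfrak{o}) : c\in(\mathfrak{o}-\{0\})/\mathfrak{o}^\times,\ a\in\mathfrak{o}/c\mathfrak{o}\}\cup\{I_2\}$. $\Gamma(3)=\{A\in SL_3(\mathfrak{o}):A\equiv I_3\pmod{3\mathfrak{o}}\}$ (entrywise), $\Gamma_\infty(3)$ its subgroup of upper triangular unipotent matrices. $D(3)$: diagonal $\mathrm{diag}(i,j,k)$ with $i,j,k\in\mathfrak{o}$, $ijk=1$.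 $U(3)$: matrices $\begin{pmatrix}1&\alpha&\beta\\&1&\gamma\\&&1\end{pmatrix}$ with $\alpha,\beta,\gamma\in\{0,1,2\}+\{0,1,2\}\omega$. For $y=\begin{pmatrix}a&b\\c&d\end{pmatrix}\in SL_2(\mathfrak{o})$, $\varphi_1(y)=\begin{pmatrix}a&b&0\\c&d&0\\0&0&1\end{pmatrix}$, $\varphi_2(y)=\begin{pmatrix}1&0&0\\0&a&b\\0&c&d\end{pmatrix}$. *)

(* the ring o = Z[omega] is realised inside algC. *)
From HB Require Import structures.
From mathcomp Require Import all_boot all_order all_algebra all_field.
Set Implicit Arguments. Unset Strict Implicit. Unset Printing Implicit Defensive.
Import Order.TTheory GRing.Theory Num.Theory.
Local Open Scope ring_scope.

(* omega = e^{2 pi i/3} = (-1 + i sqrt 3)/2 *)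
Definition omega : algC := (-1 + 'i * sqrtC 3) / 2.

Definition inO (z : algC) : Prop := exists x y : int, z = x%:~R + y%:~R * omega.

Definition unitO (u : algC) : Prop := inO u /\ u != 0 /\ inO u^-1.

Definition dvdO (c x : algC) : Prop := exists k, inO k /\ x = k * c.

Definition nonzero_reps (Crep : algC -> Prop) : Prop :=
  (forall c, Crep c -> inO c /\ c != 0) /\
  (forall c, inO c -> c != 0 ->
     exists! c', Crep c' /\ exists u, unitO u /\ c' = u * c).

Definition residue_reps (Crep : algC -> Prop) (Arep : algC -> algC -> Prop) : Prop :=
  forall c, Crep c ->
    (forall a, Arep c a -> inO a) /\
    (forall x, inO x -> exists! a, Arep c a /\ dvdO c (x - a)).

Definition i0 : 'I_3 := @Ordinal 3 0 isT.
Definition i1 : 'I_3 := @Ordinal 3 1 isT.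
Definition i2 : 'I_3 := @Ordinal 3 2 isT.
Definition j0 : 'I_2 := @Ordinal 2 0 isT.
Definition j1 : 'I_2 := @Ordinal 2 1 isT.

Definition matO (n : nat) (A : 'M[algC]_n) : Prop := forall i j, inO (A i j).

Definition SL2O (y : 'M[algC]_2) : Prop := matO y /\ \det y = 1.
Definition SL3O (A : 'M[algC]_3) : Prop := matO A /\ \det A = 1.

Definition Yset (Crep : algC -> Prop) (Arep : algC -> algC -> Prop)
  (y : 'M[algC]_2) : Prop :=
  y = 1%:M \/ (SL2O y /\ Crep (y j1 j0) /\ Arep (y j1 j0) (y j0 j0)).

Definition Gamma3 (A : 'M[algC]_3) : Prop :=
  SL3O A /\ forall i j, dvdO 3 (A i j - (i == j)%:R).
Definition Gamma_inf3 (A : 'M[algC]_3) : Prop :=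
  Gamma3 A /\ forall i j : 'I_3, (j <= i)%N -> A i j = (i == j)%:R.

Definition mx3 (a b c d e f g h k : algC) : 'M[algC]_3 :=
  \matrix_(i < 3, j < 3)
    nth 0 (nth [::] [:: [:: a; b; c]; [:: d; e; f]; [:: g; h; k]] i) j.

Definition D3 (D : 'M[algC]_3) : Prop :=
  exists x y z, [/\ inO x, inO y, inO z, x * y * z = 1 & D = mx3 x 0 0 0 y 0 0 0 z].

Definition coefU (x : algC) : Prop :=
  exists m n : nat, [/\ (m < 3)%N, (n < 3)%N & x = m%:R + n%:R * omega].

Definition U3 (U : 'M[algC]_3) : Prop :=
  exists al be ga, [/\ coefU al, coefU be, coefU ga & U = mx3 1 al be 0 1 ga 0 0 1].

Definition phi1 (y : 'M[algC]_2) : 'M[algC]_3 :=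
  mx3 (y j0 j0) (y j0 j1) 0 (y j1 j0) (y j1 j1) 0 0 0 1.
Definition phi2 (y : 'M[algC]_2) : 'M[algC]_3 :=
  mx3 1 0 0 0 (y j0 j0) (y j0 j1) 0 (y j1 j0) (y j1 j1).

Definition Delta10 (A : 'M[algC]_3) : Prop :=
  SL3O A /\ (A i1 i0 != 0 \/ A i2 i0 != 0) /\
  A i1 i0 * A i2 i1 - A i1 i1 * A i2 i0 = 0.

Definition piece (y1 y2 : 'M[algC]_2) (d u A : 'M[algC]_3) : Prop :=
  exists g, Gamma_inf3 g /\
    A = phi2 (invmx y1) *m phi1 (invmx y2) *m d *m u *m g.

Definition index_ok (Crep : algC -> Prop) (Arep : algC -> algC -> Prop)
  (y1 y2 : 'M[algC]_2) (d u : 'M[algC]_3) : Prop :=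
  [/\ Yset Crep Arep y1, Yset Crep Arep y2, y2 <> 1%:M, D3 d & U3 u].

(* For A in SL_3(o), left multiplication by phi2(y1) only mixes rows 2 and 3,
   so the (3,1) and (3,2) entries of phi2(y1) A vanish iff the bottom row of
   y1 kills the columns (a21, a31) and (a22, a32); when (a21, a31) <> 0 the
   second condition follows from the first exactly when
   a21 a32 - a22 a31 = 0.  Since o = Z[omega] is Euclidean, hence Bezout,
   such a y1 exists, and Y(o) is a system of representatives of
   B(o) \ SL_2(o), B the upper triangular matrices, so y1 may be taken in
   Y(o) and is then unique.  Likewise phi1(y2), y2 in Y(o), clears the (2,1)
   entry of phi2(y1) A; that entry is nonzero, so y2 <> I.  What remains is
   an upper triangular matrix of SL_3(o), and it factors uniquely as d u g
   with d diagonal, u in U(3) and g in Gamma_infty(3), because the entries of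
   u are the residues mod 3 of the rescaled off-diagonal entries. *)
From HB Require Import structures.
From mathcomp Require Import all_boot all_order all_algebra all_field.
From mathcomp Require Import ring zify.
Set Implicit Arguments. Unset Strict Implicit. Unset Printing Implicit Defensive.
Import Order.TTheory GRing.Theory Num.Theory.
Local Open Scope ring_scope.

Section Mx3Entries.
Variables a b c d e f g h k : algC.
Let M := mx3 a b c d e f g h k.
Lemma mx3_00 : M i0 i0 = a. Proof. by rewrite mxE. Qed.
Lemma mx3_01 : M i0 i1 = b. Proof. by rewrite mxE. Qed.
Lemma mx3_02 : M i0 i2 = c. Proof. by rewrite mxE. Qed.
Lemma mx3_10 : M i1 i0 = d. Proof. by rewrite mxE. Qed.
Lemma mx3_11 : M i1 i1 = e. Proof. by rewrite mxE. Qed.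
Lemma mx3_12 : M i1 i2 = f. Proof. by rewrite mxE. Qed.
Lemma mx3_20 : M i2 i0 = g. Proof. by rewrite mxE. Qed.
Lemma mx3_21 : M i2 i1 = h. Proof. by rewrite mxE. Qed.
Lemma mx3_22 : M i2 i2 = k. Proof. by rewrite mxE. Qed.
End Mx3Entries.

Definition mx3E :=
  (mx3_00, mx3_01, mx3_02, mx3_10, mx3_11, mx3_12, mx3_20, mx3_21, mx3_22).

Lemma ord3P (i : 'I_3) : [\/ i = i0, i = i1 | i = i2].
Proof.
by case: i => -[|[|[|//]]] ?; [constructor 1 | constructor 2 | constructor 3];
  apply: val_inj.
Qed.

Lemma mx3_eta (A : 'M[algC]_3) :
  A = mx3 (A i0 i0) (A i0 i1) (A i0 i2) (A i1 i0) (A i1 i1) (A i1 i2)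
          (A i2 i0) (A i2 i1) (A i2 i2).
Proof.
by apply/matrixP => i j; case: (ord3P i) => ->; case: (ord3P j) => ->; rewrite mx3E.
Qed.

Lemma mul_mx3 a b c d e f g h k a' b' c' d' e' f' g' h' k' :
  mx3 a b c d e f g h k *m mx3 a' b' c' d' e' f' g' h' k' =
  mx3 (a * a' + b * d' + c * g') (a * b' + b * e' + c * h')
      (a * c' + b * f' + c * k') (d * a' + e * d' + f * g')
      (d * b' + e * e' + f * h') (d * c' + e * f' + f * k')
      (g * a' + h * d' + k * g') (g * b' + h * e' + k * h')
      (g * c' + h * f' + k * k').
Proof.
apply/matrixP => i j; rewrite !mxE !big_ord_recr big_ord0 /= !mxE /=.
by case: (ord3P i) => ->; case: (ord3P j) => ->; rewrite /= add0r.
Qed.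

Lemma det_mx3 (a b c d e f g h k : algC) : \det (mx3 a b c d e f g h k) =
  a * (e * k - f * h) - b * (d * k - f * g) + c * (d * h - e * g).
Proof.
rewrite (expand_det_row _ ord0) !big_ord_recr big_ord0 /= /cofactor.
rewrite !(expand_det_row _ ord0) !big_ord_recr !big_ord0 /= /cofactor.
by rewrite !det_mx11 !mxE /= !expr0 !expr1 !exprS !expr0; ring.
Qed.

Lemma scalar_mx3 (x : algC) : x%:M = mx3 x 0 0 0 x 0 0 0 x.
Proof.
by apply/matrixP => i j; case: (ord3P i) => ->; case: (ord3P j) => ->;
  rewrite mx3E mxE.
Qed.

Definition mx2 (a b c d : algC) : 'M[algC]_2 :=
  \matrix_(i < 2, j < 2) nth 0 (nth [::] [:: [:: a; b]; [:: c; d]] i) j.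

Section Mx2Entries.
Variables a b c d : algC.
Lemma mx2_00 : mx2 a b c d j0 j0 = a. Proof. by rewrite mxE. Qed.
Lemma mx2_01 : mx2 a b c d j0 j1 = b. Proof. by rewrite mxE. Qed.
Lemma mx2_10 : mx2 a b c d j1 j0 = c. Proof. by rewrite mxE. Qed.
Lemma mx2_11 : mx2 a b c d j1 j1 = d. Proof. by rewrite mxE. Qed.
End Mx2Entries.

Definition mx2E := (mx2_00, mx2_01, mx2_10, mx2_11).

Lemma ord2P (i : 'I_2) : i = j0 \/ i = j1.
Proof. by case: i => -[|[|//]] ?; [left | right]; apply: val_inj. Qed.

Lemma mx2_eta (A : 'M[algC]_2) : A = mx2 (A j0 j0) (A j0 j1) (A j1 j0) (A j1 j1).
Proof.
by apply/matrixP => i j; case: (ord2P i) => ->; case: (ord2P j) => ->; rewrite mx2E.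
Qed.

Lemma mul_mx2 a b c d a' b' c' d' : mx2 a b c d *m mx2 a' b' c' d' =
  mx2 (a * a' + b * c') (a * b' + b * d') (c * a' + d * c') (c * b' + d * d').
Proof.
apply/matrixP => i j; rewrite !mxE !big_ord_recr big_ord0 /= !mxE /=.
by case: (ord2P i) => ->; case: (ord2P j) => ->; rewrite /= add0r.
Qed.

Lemma mulmx2E (A B : 'M[algC]_2) i j :
  (A *m B) i j = A i j0 * B j0 j + A i j1 * B j1 j.
Proof.
rewrite mxE !big_ord_recr big_ord0 /= add0r.
by congr (A i _ * B _ j + A i _ * B _ j); apply: val_inj.
Qed.

Lemma det_mx2 (a b c d : algC) : \det (mx2 a b c d) = a * d - b * c.
Proof.
rewrite (expand_det_row _ ord0) !big_ord_recr big_ord0 /= /cofactor.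
by rewrite !det_mx11 !mxE /= !expr0 !expr1; ring.
Qed.

Lemma det2 (y : 'M[algC]_2) : \det y = y j0 j0 * y j1 j1 - y j0 j1 * y j1 j0.
Proof. by rewrite {1}[y]mx2_eta det_mx2. Qed.

Lemma scalar_mx2 (x : algC) : x%:M = mx2 x 0 0 x.
Proof.
by apply/matrixP => i j; case: (ord2P i) => ->; case: (ord2P j) => ->;
  rewrite mx2E mxE.
Qed.

Lemma invmx2 (y : 'M[algC]_2) : \det y = 1 ->
  invmx y = mx2 (y j1 j1) (- y j0 j1) (- y j1 j0) (y j0 j0).
Proof.
move=> det1; set z := mx2 _ _ _ _.
have yz : y *m z = 1%:M.
  by rewrite scalar_mx2 {1}[y]mx2_eta mul_mx2 -det1 det2; congr mx2; ring.
by rewrite -[invmx y]mulmx1 -yz mulmxA mulVmx ?mul1mx // unitmxE det1 unitr1.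
Qed.

Lemma phi1M y z : phi1 (y *m z) = phi1 y *m phi1 z.
Proof.
by rewrite /phi1 mul_mx3 [y]mx2_eta [z]mx2_eta mul_mx2 !mx2E; congr mx3; ring.
Qed.

Lemma phi2M y z : phi2 (y *m z) = phi2 y *m phi2 z.
Proof.
by rewrite /phi2 mul_mx3 [y]mx2_eta [z]mx2_eta mul_mx2 !mx2E; congr mx3; ring.
Qed.

Lemma phi1_1 : phi1 1%:M = 1%:M.
Proof. by rewrite /phi1 scalar_mx2 scalar_mx3 !mx2E. Qed.

Lemma phi2_1 : phi2 1%:M = 1%:M.
Proof. by rewrite /phi2 scalar_mx2 scalar_mx3 !mx2E. Qed.

Lemma det_phi1 y : \det (phi1 y) = \det y.
Proof. by rewrite /phi1 det_mx3 det2; ring. Qed.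

Lemma det_phi2 y : \det (phi2 y) = \det y.
Proof. by rewrite /phi2 det_mx3 det2; ring. Qed.

Section PhiRows.
Variables (y : 'M[algC]_2) (A : 'M[algC]_3) (j : 'I_3).

Lemma phi1_row1 : (phi1 y *m A) i1 j = y j1 j0 * A i0 j + y j1 j1 * A i1 j.
Proof. by case: (ord3P j) => ->; rewrite {1}[A]mx3_eta mul_mx3 !mx3E; ring. Qed.

Lemma phi1_row2 : (phi1 y *m A) i2 j = A i2 j.
Proof. by case: (ord3P j) => ->; rewrite {1}[A]mx3_eta mul_mx3 !mx3E; ring. Qed.

Lemma phi2_row1 : (phi2 y *m A) i1 j = y j0 j0 * A i1 j + y j0 j1 * A i2 j.
Proof. by case: (ord3P j) => ->; rewrite {1}[A]mx3_eta mul_mx3 !mx3E; ring. Qed.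

Lemma phi2_row2 : (phi2 y *m A) i2 j = y j1 j0 * A i1 j + y j1 j1 * A i2 j.
Proof. by case: (ord3P j) => ->; rewrite {1}[A]mx3_eta mul_mx3 !mx3E; ring. Qed.

End PhiRows.

Section PhiInverse.
Variables (n : nat) (y : 'M[algC]_2) (X : 'M[algC]_(3, n)).
Hypothesis yU : y \in unitmx.

Lemma phi1K : phi1 y *m (phi1 (invmx y) *m X) = X.
Proof. by rewrite mulmxA -phi1M mulmxV // phi1_1 mul1mx. Qed.

Lemma phi1VK : phi1 (invmx y) *m (phi1 y *m X) = X.
Proof. by rewrite mulmxA -phi1M mulVmx // phi1_1 mul1mx. Qed.

Lemma phi2K : phi2 y *m (phi2 (invmx y) *m X) = X.
Proof. by rewrite mulmxA -phi2M mulmxV // phi2_1 mul1mx. Qed.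

Lemma phi2VK : phi2 (invmx y) *m (phi2 y *m X) = X.
Proof. by rewrite mulmxA -phi2M mulVmx // phi2_1 mul1mx. Qed.

End PhiInverse.

Lemma omega2 : omega * omega = - 1 - omega.
Proof.
have ii : 'i * 'i = -1 :> algC by rewrite -expr2 sqrCi.
have s3 : sqrtC 3 * sqrtC 3 = 3 :> algC by rewrite -expr2 sqrtCK.
apply/eqP; rewrite -subr_eq0; apply/eqP; rewrite /omega.
transitivity ((('i * 'i + 1) * (sqrtC 3 * sqrtC 3) - (sqrtC 3 * sqrtC 3 - 3)) / 4
  : algC); first by field.
by rewrite ii s3; ring.
Qed.

Definition zomega (a b : int) : algC := a%:~R + b%:~R * omega.

Lemma zomegaD a b c d : zomega a b + zomega c d = zomega (a + c) (b + d).
Proof. by rewrite /zomega; ring. Qed.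

Lemma zomegaN a b : - zomega a b = zomega (- a) (- b).
Proof. by rewrite /zomega; ring. Qed.

Lemma zomegaB a b c d : zomega a b - zomega c d = zomega (a - c) (b - d).
Proof. by rewrite /zomega; ring. Qed.

Lemma zomegaM a b c d :
  zomega a b * zomega c d = zomega (a * c - b * d) (a * d + b * c - b * d).
Proof.
apply/eqP; rewrite -subr_eq0; apply/eqP.
transitivity ((b * d)%:~R * (omega * omega - (- 1 - omega)) : algC).
  by rewrite /zomega; ring.
by rewrite omega2 subrr mulr0.
Qed.

Definition normO (a b : int) : int := a * a - a * b + b * b.

Lemma normO_ge0 a b : 0 <= normO a b.
Proof. by rewrite /normO; nia. Qed.

Lemma normO_eq0 a b : normO a b = 0 -> a = 0 /\ b = 0.
Proof. by rewrite /normO => n0; split; nia. Qed.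

Lemma zomega_normO a b : zomega a b * zomega (a - b) (- b) = (normO a b)%:~R.
Proof.
rewrite zomegaM /zomega /normO.
have -> : a * - b + b * (a - b) - b * - b = 0 by ring.
by rewrite mul0r addr0; congr intmul; ring.
Qed.

Lemma zomega_eq0 a b : zomega a b = 0 -> a = 0 /\ b = 0.
Proof.
move=> z0; apply: normO_eq0; apply/eqP.
by rewrite -(eqr_int algC) -zomega_normO z0 mul0r.
Qed.

Lemma zomega_inj a b c d : zomega a b = zomega c d -> a = c /\ b = d.
Proof.
move=> e; have /zomega_eq0 [] : zomega (a - c) (b - d) = 0.
  by rewrite -zomegaB e subrr.
by split; lia.
Qed.

Lemma inO_zomega a b : inO (zomega a b). Proof. by exists a, b. Qed.

Lemma inO_int (n : int) : inO n%:~R.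
Proof. by exists n, 0; rewrite mul0r addr0. Qed.

Lemma inO0 : inO 0. Proof. exact: (inO_int 0). Qed.
Lemma inO1 : inO 1. Proof. exact: (inO_int 1). Qed.
Lemma inO_nat (n : nat) : inO n%:R. Proof. exact: (inO_int n). Qed.

Lemma inO_omega : inO omega.
Proof. by exists 0, 1; rewrite add0r mul1r. Qed.

#[local] Hint Resolve inO0 inO1 inO_nat inO_int inO_omega inO_zomega : core.

Lemma inOD x y : inO x -> inO y -> inO (x + y).
Proof. by move=> [a [b ->]] [c [d ->]]; rewrite zomegaD. Qed.

Lemma inON x : inO x -> inO (- x).
Proof. by move=> [a [b ->]]; rewrite zomegaN. Qed.

Lemma inOB x y : inO x -> inO y -> inO (x - y).
Proof. by move=> ? ?; apply/inOD/inON. Qed.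

Lemma inOM x y : inO x -> inO y -> inO (x * y).
Proof. by move=> [a [b ->]] [c [d ->]]; rewrite zomegaM. Qed.

Lemma dvdOB c x y : dvdO c x -> dvdO c y -> dvdO c (x - y).
Proof.
by move=> [k [? ->]] [l [? ->]]; exists (k - l); split; [exact: inOB | ring].
Qed.

Lemma nearest_multiple (m N : int) : 0 < N -> exists q, - N <= 2 * (m - q * N) < N.
Proof.
move=> N_gt0; exists ((2 * m + N) %/ (2 * N))%Z.
have := divz_eq (2 * m + N) (2 * N).
have := modz_ge0 (2 * m + N) (_ : 2 * N != 0).
have := ltz_pmod (2 * m + N) (_ : 2 * N > 0).
lia.
Qed.

(* With [N = normO a b], the coordinates [(e, f)] of [x conj(y) - q N] satisfy
   [normO e f = normO (x - q y) * N], and rounding makes [|e|, |f| <= N/2],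
   whence [normO e f <= 3/4 N^2]. *)
Lemma euclidO x1 x2 a b : 0 < normO a b -> exists q1 q2 r1 r2,
  zomega x1 x2 = zomega q1 q2 * zomega a b + zomega r1 r2 /\
  normO r1 r2 < normO a b.
Proof.
set N := normO a b => N_gt0.
have [q1 hq1] := nearest_multiple (x1 * (a - b) + x2 * b) N_gt0.
have [q2 hq2] := nearest_multiple (x2 * a - x1 * b) N_gt0.
set r1 := x1 - (q1 * a - q2 * b); set r2 := x2 - (q1 * b + q2 * a - q2 * b).
exists q1, q2, r1, r2; split.
  by rewrite zomegaM zomegaD /r1 /r2; congr zomega; ring.
set e := _ - q1 * N in hq1; set f := _ - q2 * N in hq2.
have norm_ef : normO r1 r2 * N = e * e - e * f + f * f.
  by rewrite /e /f /N /r1 /r2 /normO; ring.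
move: norm_ef; clearbody e f N; set R := normO r1 r2 => norm_ef.
have P1 : 0 <= (N - 2 * e) * (N + 2 * e) by apply: mulr_ge0; lia.
have P2 : 0 <= (N - 2 * f) * (N + 2 * f) by apply: mulr_ge0; lia.
have P3 : 0 <= (N - 2 * e) * (N - 2 * f) by apply: mulr_ge0; lia.
have P4 : 0 <= (N + 2 * e) * (N + 2 * f) by apply: mulr_ge0; lia.
have : 4 * (R * N) <= 3 * (N * N) by rewrite norm_ef; nia.
nia.
Qed.

Lemma bezoutO p q : inO p -> inO q -> exists g p' q' u v,
  [/\ inO p', inO q', inO u & inO v] /\
  [/\ p = g * p', q = g * q' & u * p' + v * q' = 1].
Proof.
move=> Op [a [b ->]]; rewrite -/(zomega a b).
have [n] := ubnP `|normO a b|%N.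
elim: n => // n IH in p Op a b *; rewrite ltnS => le_N_n.
have [/normO_eq0 [-> ->] | N_neq0] := eqVneq (normO a b) 0.
  exists p, 1, 0, 1, 0; split; first by split.
  by split; rewrite /zomega; ring.
have N_gt0 : 0 < normO a b by rewrite lt0r N_neq0 normO_ge0.
case: Op => x1 [x2 ->]; rewrite -/(zomega x1 x2).
have [q1 [q2 [r1 [r2 [-> lt_r]]]]] := euclidO x1 x2 N_gt0.
have [|g [p' [q' [u [v [[Op' Oq' Ou Ov] [-> -> uv1]]]]]]] :=
  IH _ (inO_zomega a b) r1 r2.
  by have := normO_ge0 r1 r2; lia.
exists g, (zomega q1 q2 * p' + q'), p', v, (u - v * zomega q1 q2); split.
  by split => //; [apply/inOD/Oq'/inOM | apply/inOB/inOM].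
by split; [ring | done | rewrite -uv1; ring].
Qed.

Lemma coefU_inO x : coefU x -> inO x.
Proof. by move=> [m [n [_ _ ->]]]; apply/inOD/inOM. Qed.

Lemma coefU_exists x : inO x -> exists al, coefU al /\ dvdO 3 (x - al).
Proof.
have divmod3 (a : int) : exists (k : int) (m : nat), (m < 3)%N /\ a = k * 3 + m%:Z.
  by exists (a %/ 3)%Z, `|(a %% 3)%Z|%N; split; lia.
move=> [a [b ->]]; have [k [m [m_lt3 ->]]] := divmod3 a.
have [l [n [n_lt3 ->]]] := divmod3 b.
exists (m%:R + n%:R * omega); split; first by exists m, n.
by exists (zomega k l); split => //; rewrite /zomega; ring.
Qed.

Lemma coefU_unique x y : coefU x -> coefU y -> dvdO 3 (x - y) -> x = y.
Proof.
move=> [m [n [m_lt3 n_lt3 ->]]] [m' [n' [m'_lt3 n'_lt3 ->]]] [_ [[p [q ->]] e]].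
have /zomega_inj [] : zomega (m%:Z - m'%:Z) (n%:Z - n'%:Z) = zomega (p * 3) (q * 3).
  transitivity (m%:R + n%:R * omega - (m'%:R + n'%:R * omega) : algC).
    by rewrite /zomega; ring.
  by rewrite e /zomega; ring.
by move=> e1 e2; congr (_%:R + _%:R * omega); lia.
Qed.

Lemma matO_mulmx n (A B : 'M[algC]_n) : matO A -> matO B -> matO (A *m B).
Proof.
move=> OA OB i j; rewrite mxE.
by elim/big_ind: _ => //; [exact: inOD | move=> k _; exact: inOM].
Qed.

Lemma matO_mx2 a b c d : inO a -> inO b -> inO c -> inO d -> matO (mx2 a b c d).
Proof.
by move=> ? ? ? ? i j; case: (ord2P i) => ->; case: (ord2P j) => ->; rewrite mx2E.
Qed.

Lemma matO_mx3 a b c d e f g h k :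
  inO a -> inO b -> inO c -> inO d -> inO e -> inO f -> inO g -> inO h -> inO k ->
  matO (mx3 a b c d e f g h k).
Proof.
by move=> *; move=> i j; case: (ord3P i) => ->; case: (ord3P j) => ->; rewrite mx3E.
Qed.

Lemma SL2O_1 : SL2O 1%:M.
Proof. by rewrite scalar_mx2; split; [apply: matO_mx2 | rewrite det_mx2; ring]. Qed.

Lemma SL2O_unit y : SL2O y -> y \in unitmx.
Proof. by case=> _ det1; rewrite unitmxE det1 unitr1. Qed.

Lemma SL2O_mul y z : SL2O y -> SL2O z -> SL2O (y *m z).
Proof.
by case=> Oy dy [Oz dz]; split; [exact: matO_mulmx | rewrite det_mulmx dy dz mulr1].
Qed.

Lemma SL2O_inv y : SL2O y -> SL2O (invmx y).
Proof.
case=> Oy dy; split; last by rewrite det_inv dy invr1.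
by rewrite invmx2 //; apply: matO_mx2 => //; apply: inON.
Qed.

Lemma SL3O_mul A B : SL3O A -> SL3O B -> SL3O (A *m B).
Proof.
by case=> OA dA [OB dB]; split; [exact: matO_mulmx | rewrite det_mulmx dA dB mulr1].
Qed.

Lemma SL3O_phi1 y : SL2O y -> SL3O (phi1 y).
Proof. by case=> Oy dy; split; [exact: matO_mx3 | rewrite det_phi1]. Qed.

Lemma SL3O_phi2 y : SL2O y -> SL3O (phi2 y).
Proof. by case=> Oy dy; split; [exact: matO_mx3 | rewrite det_phi2]. Qed.

Local Notation diag3 x y z := (mx3 x 0 0 0 y 0 0 0 z).
Local Notation unip3 a b c := (mx3 1 a b 0 1 c 0 0 1).

Definition upper3 (T : 'M[algC]_3) := [/\ T i1 i0 = 0, T i2 i0 = 0 & T i2 i1 = 0].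

Lemma dvdO3_inO x : dvdO 3 x -> inO x.
Proof. by case=> k [Ok ->]; apply: inOM => //; apply: inO_nat 3. Qed.

Lemma Gamma_inf3P g : Gamma_inf3 g <->
  exists a b c, [/\ dvdO 3 a, dvdO 3 b, dvdO 3 c & g = unip3 a b c].
Proof.
split.
  case=> -[_ cong] low; exists (g i0 i1), (g i0 i2), (g i1 i2).
  split; [move: (cong i0 i1) | move: (cong i0 i2) | move: (cong i1 i2) | ];
    rewrite /= ?subr0 //.
  rewrite {1}[g]mx3_eta.
  by rewrite !(low i0 i0, low i1 i0, low i1 i1, low i2 i0, low i2 i1, low i2 i2).
case=> a [b [c [a3 b3 c3 ->]]]; split; last first.
  by move=> i j; case: (ord3P i) => ->; case: (ord3P j) => ->; rewrite mx3E /=.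
split; first by split; [apply: matO_mx3 => //; exact: dvdO3_inO | rewrite det_mx3; ring].
have dvdO3_0 : dvdO 3 0 by exists 0; split; rewrite ?mul0r.
by move=> i j; case: (ord3P i) => ->; case: (ord3P j) => ->;
  rewrite mx3E /= ?subrr ?subr0.
Qed.

Lemma mul_diag3_unip3 x y z al be ga a b c :
  diag3 x y z *m unip3 al be ga *m unip3 a b c =
  mx3 x (x * (al + a)) (x * (be + al * c + b)) 0 y (y * (ga + c)) 0 0 z.
Proof. by rewrite !mul_mx3; congr mx3; ring. Qed.

Lemma mul3_eq1_neq0 (x y z : algC) : x * y * z = 1 -> [/\ x != 0, y != 0 & z != 0].
Proof.
move=> xyz; have : x * y * z != 0 by rewrite xyz oner_neq0.
by rewrite !mulf_eq0 !negb_or => /andP [/andP [-> ->] ->].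
Qed.

Lemma D3_U3_Gamma_upper3 d u g : D3 d -> U3 u -> Gamma_inf3 g ->
  [/\ SL3O (d *m u *m g), upper3 (d *m u *m g) & (d *m u *m g) i0 i0 != 0].
Proof.
case=> x [y [z [Ox Oy Oz xyz ->]]].
case=> al [be [ga [/coefU_inO ? /coefU_inO ? /coefU_inO ? ->]]].
case/Gamma_inf3P=> a [b [c [/dvdO3_inO ? /dvdO3_inO ? /dvdO3_inO ? ->]]].
rewrite mul_diag3_unip3; have [x0 _ _] := mul3_eq1_neq0 xyz.
split; rewrite ?mx3E //; last by split; rewrite mx3E.
split; last by rewrite det_mx3 -xyz; ring.
by apply: matO_mx3 => //; repeat first [assumption | apply: inOD | apply: inOM].
Qed.

(* Since [x y z = 1], the rescaled entries [T01 (y z)], [T02 (y z)] and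
   [T12 (x z)] are [T01 / x], [T02 / x] and [T12 / y]. *)
Lemma upper3_D3_U3_Gamma T : SL3O T -> upper3 T ->
  exists d u g, [/\ D3 d, U3 u, Gamma_inf3 g & T = d *m u *m g].
Proof.
case=> OT detT [T10 T20 T21].
have xyz : T i0 i0 * T i1 i1 * T i2 i2 = 1.
  by rewrite -detT {4}[T]mx3_eta T10 T20 T21 det_mx3; ring.
set x := T i0 i0 in xyz *; set y := T i1 i1 in xyz *; set z := T i2 i2 in xyz *.
have Op : inO (T i0 i1 * (y * z)) := inOM (OT _ _) (inOM (OT _ _) (OT _ _)).
have Oq : inO (T i0 i2 * (y * z)) := inOM (OT _ _) (inOM (OT _ _) (OT _ _)).
have Or : inO (T i1 i2 * (x * z)) := inOM (OT _ _) (inOM (OT _ _) (OT _ _)).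
have [al [al3 a3]] := coefU_exists Op.
have [ga [ga3 c3]] := coefU_exists Or.
set c := _ - ga in c3; set p := T i0 i1 * _ in a3.
have Ob := inOB Oq (inOM (coefU_inO al3) (inOB Or (coefU_inO ga3))).
have [be [be3 b3]] := coefU_exists Ob.
set b := _ - be in b3.
exists (diag3 x y z), (unip3 al be ga), (unip3 (p - al) b c); split.
- by exists x, y, z; split => //; apply: OT.
- by exists al, be, ga.
- by apply/Gamma_inf3P; exists (p - al), b, c.
rewrite mul_diag3_unip3 {1}[T]mx3_eta T10 T20 T21 /b /c /p.
by congr mx3; rewrite -[LHS]mulr1 -xyz; ring.
Qed.

Lemma D3_U3_Gamma_unique d u g d' u' g' :
  D3 d -> U3 u -> Gamma_inf3 g -> D3 d' -> U3 u' -> Gamma_inf3 g' ->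
  d *m u *m g = d' *m u' *m g' -> d = d' /\ u = u'.
Proof.
case=> x [y [z [_ _ _ xyz ->]]] [al [be [ga [al3 be3 ga3 ->]]]].
case/Gamma_inf3P=> a [b [c [a3 b3 c3 ->]]].
case=> x' [y' [z' [_ _ _ _ ->]]] [al' [be' [ga' [al3' be3' ga3' ->]]]].
case/Gamma_inf3P=> a' [b' [c' [a3' b3' c3' ->]]].
rewrite !mul_diag3_unip3 => e; have entry i j := congr1 (fun M : 'M_3 => M i j) e.
move: (entry i0 i0) (entry i1 i1) (entry i2 i2) (entry i0 i1) (entry i0 i2) (entry i1 i2).
rewrite !mx3E => <- <- <- /(mulfI _) e01 /(mulfI _) e02 /(mulfI _) e12.
have [x0 y0 _] := mul3_eq1_neq0 xyz.
have {}e01 := e01 x0; have {}e02 := e02 x0; have {}e12 := e12 y0.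
have eal : al = al'.
  apply: coefU_unique => //; have -> : al - al' = a' - a.
    by rewrite -[al](addrK a) e01; ring.
  exact: dvdOB.
have ega : ga = ga'.
  apply: coefU_unique => //; have -> : ga - ga' = c' - c.
    by rewrite -[ga](addrK c) e12; ring.
  exact: dvdOB.
have ec : c = c' by rewrite -[c](addKr ga) e12 ega; ring.
subst al' ga' c'; split => //; congr mx3.
apply: coefU_unique => //; have -> : be - be' = b' - b.
  by rewrite -[be](addrK (al * c + b)) addrA e02; ring.
exact: dvdOB.
Qed.

Lemma lincomb_neq0 (a b p q : algC) : a * p + b * q != 0 -> p != 0 \/ q != 0.
Proof.
have [-> | ] := eqVneq p 0; last by left.
by have [-> | ] := eqVneq q 0; [rewrite !mulr0 addr0 eqxx | right].
Qed.

Lemma mul_pair_eq0 (x p q : algC) :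
  p != 0 \/ q != 0 -> x * p = 0 -> x * q = 0 -> x = 0.
Proof.
case=> nz /eqP xp /eqP xq; apply/eqP; [move: xp | move: xq];
  by rewrite mulf_eq0 (negPf nz) orbF.
Qed.

Lemma cross_eq0 (p q a b c d : algC) : p != 0 \/ q != 0 ->
  a * p + b * q = 0 -> c * p + d * q = 0 -> a * d - b * c = 0.
Proof.
move=> nz e1 e2; apply: (mul_pair_eq0 nz).
  transitivity (d * (a * p + b * q) - b * (c * p + d * q)); first by ring.
  by rewrite e1 e2; ring.
transitivity (a * (c * p + d * q) - c * (a * p + b * q)); first by ring.
by rewrite e1 e2; ring.
Qed.

Lemma cross_eq0_orth (p q p' q' r s : algC) : p != 0 \/ q != 0 ->
  p * q' - p' * q = 0 -> r * p + s * q = 0 -> r * p' + s * q' = 0.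
Proof.
move=> nz e1 e2; apply: (mul_pair_eq0 nz).
  transitivity (p' * (r * p + s * q) + s * (p * q' - p' * q)); first by ring.
  by rewrite e1 e2; ring.
transitivity (q' * (r * p + s * q) - r * (p * q' - p' * q)); first by ring.
by rewrite e1 e2; ring.
Qed.

Lemma SL2O_row1_neq0 y : SL2O y -> y j1 j0 != 0 \/ y j1 j1 != 0.
Proof.
case=> _; rewrite det2 => dy; apply: (@lincomb_neq0 (- y j0 j1) (y j0 j0)).
by rewrite mulNr addrC dy oner_neq0.
Qed.

Lemma unitO1 : unitO 1.
Proof. by split; [| split; [exact: oner_neq0 | rewrite invr1]]. Qed.

Definition annihilates (y : 'M[algC]_2) (p q : algC) :=
  y j1 j0 * p + y j1 j1 * q = 0.

Lemma annihilates_mul_upper (z y : 'M[algC]_2) p q :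
  z j1 j0 = 0 -> annihilates y p q -> annihilates (z *m y) p q.
Proof.
rewrite /annihilates !mulmx2E => z10 e.
by rewrite z10 !mul0r !add0r -!mulrA -mulrDr e mulr0.
Qed.

Lemma pieceE y1 y2 d u A : y1 \in unitmx -> y2 \in unitmx ->
  piece y1 y2 d u A <->
  exists g, Gamma_inf3 g /\ phi1 y2 *m (phi2 y1 *m A) = d *m u *m g.
Proof.
move=> U1 U2; split=> -[g [G e]]; exists g; split => //.
  by rewrite e -!mulmxA phi2K // phi1K.
by rewrite -[A](phi2VK _ U1) -[phi2 y1 *m A](phi1VK _ U2) e !mulmxA.
Qed.

Lemma upper3_reduced y1 y2 A :
  upper3 (phi1 y2 *m (phi2 y1 *m A)) <->
  [/\ annihilates y2 ((phi2 y1 *m A) i0 i0) ((phi2 y1 *m A) i1 i0),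
      annihilates y1 (A i1 i0) (A i2 i0) & annihilates y1 (A i1 i1) (A i2 i1)].
Proof. by rewrite /upper3 phi1_row1 !phi1_row2 !phi2_row2. Qed.

Section Representatives.
Variables (Crep : algC -> Prop) (Arep : algC -> algC -> Prop).
Hypotheses (Creps : nonzero_reps Crep) (Areps : residue_reps Crep Arep).
Local Notation Y := (Yset Crep Arep).

Lemma Yset_SL2O y : Y y -> SL2O y.
Proof. by case=> [->|[]] //; exact: SL2O_1. Qed.

Lemma Yset_neq1 y : Y y -> y <> 1%:M -> y j1 j0 != 0.
Proof. by case=> [// | [_ [Cc _]]] _; have [] := Creps.1 _ Cc. Qed.

Lemma Crep_unit_eq c m : Crep c -> Crep (m * c) -> unitO m -> m = 1.
Proof.
move=> Cc Cmc m_unit; have [Oc c_neq0] := Creps.1 c Cc.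
have [c' [_ uniq]] := Creps.2 c Oc c_neq0.
have e1 : c' = c.
  by apply: uniq; split => //; exists 1; rewrite mul1r; split => //; exact: unitO1.
have e2 : c' = m * c by apply: uniq; split => //; exists m.
by apply: (mulIf c_neq0); rewrite mul1r -e2 e1.
Qed.

Lemma Arep_shift_eq c a k :
  Crep c -> Arep c a -> Arep c (a + k * c) -> inO k -> k = 0.
Proof.
move=> Cc Aa Aa' Ok; have [Oc c_neq0] := Creps.1 c Cc.
have [OA uniqA] := Areps Cc; have [a0 [_ uniq]] := uniqA a (OA a Aa).
have e1 : a0 = a by apply: uniq; split => //; exists 0; rewrite subrr mul0r.
have e2 : a0 = a + k * c.
  by apply: uniq; split => //; exists (- k); split; [exact: inON | ring].
have /addrI/eqP : a + k * c = a + 0 by rewrite -e2 e1 addr0.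
by rewrite mulf_eq0 (negPf c_neq0) orbF => /eqP.
Qed.

Lemma Yset_upper_exists y :
  SL2O y -> exists z, [/\ SL2O z, z j1 j0 = 0 & Y (z *m y)].
Proof.
move=> Sy; have [c0 | c_neq0] := eqVneq (y j1 j0) 0.
  exists (invmx y); split; [exact: SL2O_inv | | by left; rewrite mulVmx // SL2O_unit].
  by rewrite invmx2 ?mx2E ?c0 ?oppr0 //; case: Sy.
case: (Sy) => Oy _.
have [c [[Cc [w [[Ow [w_neq0 Owi]] e]]] _]] := Creps.2 _ (Oy j1 j0) c_neq0.
have [a [[Aa [k [Ok ea]]] _]] := (Areps Cc).2 _ (inOM Owi (Oy j0 j0)).
set z := mx2 w^-1 (- (k * w)) 0 w.
have Sz : SL2O z.
  split; first by apply: matO_mx2 => //; apply/inON/inOM.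
  by rewrite det_mx2 mulr0 subr0 mulVf.
exists z; split => //; first by rewrite mx2E.
right; split; first exact: SL2O_mul.
rewrite !mulmx2E !mx2E mul0r add0r -e; split => //.
have -> // : w^-1 * y j0 j0 + - (k * w) * y j1 j0 = a.
apply/eqP; rewrite -subr_eq0; apply/eqP.
by transitivity (w^-1 * y j0 j0 - a - k * c); [rewrite e; ring | rewrite ea subrr].
Qed.

Lemma Yset_upper_unique y y' z : Y y -> Y y' -> SL2O z -> z j1 j0 = 0 ->
  y' = z *m y -> y' = y.
Proof.
move=> Yy Yy' [Oz dz] z10 e; subst y'.
have lm : z j0 j0 * z j1 j1 = 1 by move: dz; rewrite det2 z10 mulr0 subr0.
have m_neq0 : z j1 j1 != 0.
  by apply/eqP => m0; move: lm; rewrite m0 mulr0 => /esym/eqP; rewrite oner_eq0.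
have zy10 : (z *m y) j1 j0 = z j1 j1 * y j1 j0.
  by rewrite mulmx2E z10 mul0r add0r.
case: Yy => [y1 | [_ [Cc Aa]]].
  rewrite y1 mulmx1 in Yy' *; case: Yy' => [// | [_ [C0 _]]].
  by have [_] := Creps.1 _ C0; rewrite z10 eqxx.
have [_ c_neq0] := Creps.1 _ Cc.
case: Yy' => [zy1 | [_ [Cc' Aa']]].
  move: zy10; rewrite zy1 scalar_mx2 mx2E => /esym/eqP.
  by rewrite mulf_eq0 (negPf m_neq0) (negPf c_neq0).
have m1 : z j1 j1 = 1.
  apply: Crep_unit_eq Cc _ _; first by rewrite -zy10.
  split; [exact: Oz | split => //].
  by rewrite (mulr1_eq (_ : z j1 j1 * z j0 j0 = 1)) // mulrC.
have l1 : z j0 j0 = 1 by rewrite -lm m1 mulr1.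
have k0 : z j0 j1 = 0.
  apply: Arep_shift_eq Cc Aa _ (Oz _ _).
  by move: Aa'; rewrite zy10 m1 mul1r mulmx2E l1 mul1r.
by rewrite [z]mx2_eta l1 k0 z10 m1 -scalar_mx2 mul1mx.
Qed.

Lemma Yset_annihilator p q : inO p -> inO q -> exists y, Y y /\ annihilates y p q.
Proof.
move=> Op Oq; have [g [p' [q' [u [v [[Op' Oq' Ou Ov] [-> -> uv1]]]]]]] := bezoutO Op Oq.
have Sy : SL2O (mx2 (- u) (- v) q' (- p')).
  split; first by apply: matO_mx2 => //; apply: inON.
  by rewrite det_mx2 -uv1; ring.
have [z [_ z10 Yzy]] := Yset_upper_exists Sy.
exists (z *m mx2 (- u) (- v) q' (- p')); split => //.
by apply: annihilates_mul_upper => //; rewrite /annihilates !mx2E; ring.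
Qed.

Lemma Yset_annihilator_unique y y' p q : p != 0 \/ q != 0 -> Y y -> Y y' ->
  annihilates y p q -> annihilates y' p q -> y' = y.
Proof.
move=> nz Yy Yy' ann ann'; have Sy := Yset_SL2O Yy.
apply: (Yset_upper_unique Yy Yy' (z := y' *m invmx y)).
- exact: SL2O_mul (Yset_SL2O Yy') (SL2O_inv Sy).
- rewrite mulmx2E invmx2; last by case: Sy.
  by rewrite !mx2E mulrN (cross_eq0 nz ann' ann).
- by rewrite mulmxKV ?SL2O_unit.
Qed.

Lemma Delta10_piece A : Delta10 A ->
  exists y1 y2 d u, index_ok Crep Arep y1 y2 d u /\ piece y1 y2 d u A.
Proof.
case=> SA [nzA minor]; have [OA _] := SA.
have [y1 [Y1 ann1]] := Yset_annihilator (OA i1 i0) (OA i2 i0).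
have S1 := Yset_SL2O Y1; have ann1' := cross_eq0_orth nzA minor ann1.
have SB := SL3O_mul (SL3O_phi2 S1) SA; set B := phi2 y1 *m A in SB.
have [y2 [Y2 ann2]] := Yset_annihilator (SB.1 i0 i0) (SB.1 i1 i0).
have S2 := Yset_SL2O Y2.
have B10 : B i1 i0 != 0.
  apply/eqP => B10; case: nzA; rewrite -[A](phi2VK _ (SL2O_unit S1)) -/B.
    by rewrite phi2_row1 B10 phi2_row2 ann1 !mulr0 addr0 eqxx.
  by rewrite phi2_row2 B10 phi2_row2 ann1 !mulr0 addr0 eqxx.
have [d [u [g [D U G e]]]] : exists d u g,
    [/\ D3 d, U3 u, Gamma_inf3 g & phi1 y2 *m B = d *m u *m g].
  apply: upper3_D3_U3_Gamma; first exact: SL3O_mul (SL3O_phi1 S2) SB.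
  exact/upper3_reduced.
exists y1, y2, d, u; split; last by apply/pieceE; rewrite ?SL2O_unit //; exists g.
split => // y2_1; move: ann2.
by rewrite /annihilates y2_1 scalar_mx2 !mx2E mul0r add0r mul1r; apply/eqP.
Qed.

Lemma piece_annihilators y1 y2 d u A :
  index_ok Crep Arep y1 y2 d u -> piece y1 y2 d u A ->
  [/\ annihilates y1 (A i1 i0) (A i2 i0), annihilates y1 (A i1 i1) (A i2 i1),
      annihilates y2 ((phi2 y1 *m A) i0 i0) ((phi2 y1 *m A) i1 i0),
      (phi2 y1 *m A) i1 i0 != 0 & A i1 i0 != 0 \/ A i2 i0 != 0].
Proof.
case=> Y1 Y2 y2_neq1 D U; have [S1 S2] := (Yset_SL2O Y1, Yset_SL2O Y2).
case/(pieceE _ _ _ (SL2O_unit S1) (SL2O_unit S2)) => g [G e].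
have [_ up T00] := D3_U3_Gamma_upper3 D U G; rewrite -e in up T00.
have [ann2 ann1 ann1'] := (upper3_reduced y1 y2 A).1 up; have [C10 _ _] := up.
have B10 : (phi2 y1 *m A) i1 i0 != 0.
  rewrite -[phi2 y1 *m A](phi1VK _ (SL2O_unit S2)) phi1_row1 invmx2; last by case: S2.
  rewrite !mx2E C10 mulr0 addr0 mulNr oppr_eq0 mulf_neq0 //.
  exact: Yset_neq1.
by split => //; apply: (@lincomb_neq0 (y1 j0 j0) (y1 j0 j1)); rewrite -phi2_row1.
Qed.

Lemma piece_Delta10 y1 y2 d u A :
  index_ok Crep Arep y1 y2 d u -> piece y1 y2 d u A -> Delta10 A.
Proof.
move=> ok P; have [ann1 ann1' _ _ nzA] := piece_annihilators ok P.
case: ok P => Y1 Y2 _ D U [g [G e]]; have [S1 S2] := (Yset_SL2O Y1, Yset_SL2O Y2).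
split; last split => //.
  have [ST _ _] := D3_U3_Gamma_upper3 D U G; rewrite e -!mulmxA (mulmxA d).
  exact: SL3O_mul (SL3O_phi2 (SL2O_inv S1)) (SL3O_mul (SL3O_phi1 (SL2O_inv S2)) ST).
have := cross_eq0 (SL2O_row1_neq0 S1)
  (a := A i1 i0) (b := A i2 i0) (c := A i1 i1) (d := A i2 i1).
by rewrite !(mulrC (A _ _) (y1 _ _)) (mulrC (A i2 i0)); apply.
Qed.

Lemma piece_unique y1 y2 y1' y2' d u d' u' A :
  index_ok Crep Arep y1 y2 d u -> index_ok Crep Arep y1' y2' d' u' ->
  piece y1 y2 d u A -> piece y1' y2' d' u' A ->
  [/\ y1 = y1', y2 = y2', d = d' & u = u'].
Proof.
move=> ok ok' P P'.
have [ann1 _ ann2 B10 nzA] := piece_annihilators ok P.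
have [ann1' _ ann2' _ _] := piece_annihilators ok' P'.
case: ok ok' P P' => Y1 Y2 _ D U [Y1' Y2' _ D' U'].
have e1 := Yset_annihilator_unique nzA Y1 Y1' ann1 ann1'; subst y1'.
have e2 := Yset_annihilator_unique (or_intror B10) Y2 Y2' ann2 ann2'; subst y2'.
have [U1 U2] := (SL2O_unit (Yset_SL2O Y1), SL2O_unit (Yset_SL2O Y2)).
case/(pieceE _ _ _ U1 U2) => g [G e] /(pieceE _ _ _ U1 U2) [g' [G' e']].
by have [-> ->] := D3_U3_Gamma_unique D U G D' U' G' (etrans (esym e) e').
Qed.

End Representatives.

Theorem theorem2p15 (Crep : algC -> Prop) (Arep : algC -> algC -> Prop) :
  nonzero_reps Crep -> residue_reps Crep Arep ->
  (forall A : 'M[algC]_3,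
     Delta10 A <->
     exists y1 y2 d u, index_ok Crep Arep y1 y2 d u /\ piece y1 y2 d u A) /\
  (forall (y1 y2 y1' y2' : 'M[algC]_2) (d u d' u' A : 'M[algC]_3),
     index_ok Crep Arep y1 y2 d u -> index_ok Crep Arep y1' y2' d' u' ->
     piece y1 y2 d u A -> piece y1' y2' d' u' A ->
     [/\ y1 = y1', y2 = y2', d = d' & u = u']).
Proof.
move=> Creps Areps; split; last exact: piece_unique.
move=> A; split; first exact: Delta10_piece.
by case=> y1 [y2 [d [u [ok P]]]]; exact: piece_Delta10 ok P.
Qed.
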